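(* Let $d\ge 1$ and let $(X_1,\ldots,X_d,Y)$ be a random vector with continuous marginal distribution functions and $(d+1)$-dimensional copula $C$; let $(U_1,\ldots,U_d,V)$ have standard uniform marginals and copula $C$. Fix $\boldsymbol{\alpha}\in[0,1)^d$ with $C(\boldsymbol{\alpha},1)<1$. Then for every $\beta\in(0,1)$, $$\mathrm{VCoVaR}_{\boldsymbol{\alpha},\beta}(Y|\boldsymbol X)=F_Y^{-1}\big(F^{-1}_{V|A_{\boldsymbol U}}(\beta)\big),$$ where $F_{V|A_{\boldsymbol U}}$ is the distribution function of $V$ given $A_{\boldsymbol U}=\{\exists\, i:U_i>\alpha_i\}$.
   Context: $C(\boldsymbol{\alpha},v)=C(\alpha_1,\ldots,\alpha_d,v)$. For a distribution function $F$, $F^{-1}(t)=\inf\{x:F(x)\ge t\}$; $\mathrm{VaR}_t(Z)=F_Z^{-1}(t)$. The vulnerability conditional value-at-risk is $\mathrm{VCoVaR}_{\boldsymbol{\alpha},\beta}(Y|\boldsymbol X)=\mathrm{VaR}_\beta\big(Y\,\big|\,\exists\, i: X_i>\mathrm{VaR}_{\alpha_i}(X_i)\big)$, i.e. the $\beta$-quantile (generalized inverse) of the conditional distribution of $Y$ given the event $\{\exists\, i: X_i>\mathrm{VaR}_{\alpha_i}(X_i)\}$. *)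

From HB Require Import structures.
From mathcomp Require Import all_boot all_order all_algebra.
From mathcomp Require Import all_classical all_reals all_analysis.
Set Implicit Arguments. Unset Strict Implicit. Unset Printing Implicit Defensive.
Import Order.TTheory GRing.Theory Num.Theory.
Local Open Scope classical_set_scope.
Local Open Scope ring_scope.

Section Defs.
Context {R : realType} {dT : measure_display} {T : measurableType dT}.

(* generalized inverse F^{-1}(t) = inf {x : F x >= t}, valued in extended reals
   (so that e.g. F^{-1}(0) = -oo) *)
Definition quantile (F : R -> R) (t : \bar R) : \bar R :=
  ereal_inf [set x%:E | x in [set x : R | (t <= (F x)%:E)%E]].

Definition df (P : probability T R) (Z : T -> R) (x : R) : R :=
  fine (P [set w | Z w <= x]).

Definition cond_df (P : probability T R) (Z : T -> R) (A : set T) (x : R) : R :=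
  fine (P ([set w | Z w <= x] `&` A)) / fine (P A).

Definition VaR (P : probability T R) (Z : T -> R) (t : R) : \bar R :=
  quantile (df P Z) t%:E.

Definition exceed_event (n : nat) (P : probability T R) (X : 'I_n -> T -> R)
  (alpha : 'I_n -> R) : set T :=
  [set w | exists i : 'I_n, (VaR P (X i) (alpha i) < (X i w)%:E)%E].

Definition VCoVaR (n : nat) (P : probability T R) (X : 'I_n -> T -> R)
  (Y : T -> R) (alpha : 'I_n -> R) (beta : R) : \bar R :=
  quantile (cond_df P Y (exceed_event P X alpha)) beta%:E.

End Defs.

From HB Require Import structures.
From mathcomp Require Import all_boot all_order all_algebra.
From mathcomp Require Import all_classical all_reals all_analysis.
From mathcomp Require Import lra.
Import Order.TTheory GRing.Theory Num.Theory numFieldNormedType.Exports.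
Local Open Scope classical_set_scope.
Local Open Scope ring_scope.

(* The exceedance event is the complement of B_X = {forall i, X_i <= VaR_{alpha_i}(X_i)}.
   By continuity of the marginals, F_{X_i}(VaR_{alpha_i}(X_i)) = alpha_i (and B_X is empty
   when some alpha_i = 0, where VaR is -oo), so the copula gives
   P(B_X, Y <= y) = C(alpha, F_Y y) = P'(B_U, V <= F_Y y), B_U = {forall i, U_i <= alpha_i};
   letting y -> +oo also P(B_X) = P'(B_U). Hence the conditional distribution function of Y
   given the exceedance event is H o F_Y, with H that of V given A_U = ~` B_U. Since F_V is
   continuous, so is H, hence beta <= H v <-> H^{-1}(beta) <= v, and the generalized inverse
   of H o F_Y at beta is F_Y^{-1}(H^{-1}(beta)). *)

Local Notation pr P A := (fine (P A)).

Section probability_fine.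
Context {R : realType} {dT : measure_display} {T : measurableType dT}.
Variable P : probability T R.
Implicit Types A B : set T.

Lemma prE A : measurable A -> (pr P A)%:E = P A.
Proof. by move=> mA; rewrite fineK // fin_num_measure. Qed.

Lemma pr_ge0 A : 0 <= pr P A.
Proof. exact: fine_ge0. Qed.

Lemma pr_le1 A : measurable A -> pr P A <= 1.
Proof. by move=> mA; rewrite -lee_fin prE // probability_le1. Qed.

Lemma le_pr A B : measurable A -> measurable B -> A `<=` B -> pr P A <= pr P B.
Proof. by move=> mA mB AB; rewrite -lee_fin !prE // le_measure // inE. Qed.

Lemma prIl {A B} : measurable A -> measurable B -> pr P (A `&` B) <= pr P A.
Proof. by move=> mA mB; apply: le_pr => //; exact: measurableI. Qed.

Lemma prD A B : measurable A -> measurable B ->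
  pr P (A `\` B) = pr P A - pr P (A `&` B).
Proof.
move=> mA mB; have mAB := measurableI _ _ mA mB.
apply/EFin_inj; rewrite EFinB !prE //; last exact: measurableD.
by rewrite measureD // (le_lt_trans (probability_le1 _ mA)) ?ltry.
Qed.

Lemma pr_setC A : measurable A -> pr P (~` A) = 1 - pr P A.
Proof.
by move=> mA; apply/EFin_inj; rewrite EFinB !prE ?probability_setC //; exact: measurableC.
Qed.
End probability_fine.

Section quantile.
Context {R : realType}.
Implicit Types (F G H : R -> R) (t r : R).

Lemma quantile_comp H G t r : (forall x, t <= H x <-> r <= x) ->
  quantile (H \o G) t%:E = quantile G r%:E.
Proof.
move=> Hr; rewrite /quantile; congr ereal_inf; congr image.
by apply/seteqP; split => y /=; rewrite !lee_fin => /Hr.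
Qed.

Lemma quantile_inf F t : has_lbound [set x | t <= F x] -> [set x | t <= F x] !=set0 ->
  quantile F t%:E = (inf [set x | t <= F x])%:E.
Proof.
by move=> lbS S0; rewrite /quantile -ereal_inf_EFin.
Qed.

Lemma quantile_continuous {F t} : continuous F -> nondecreasing_fun F ->
  (exists x, F x < t) -> (exists x, t <= F x) ->
  exists q, [/\ quantile F t%:E = q%:E, F q = t & forall x, t <= F x <-> q <= x].
Proof.
move=> cF ndF [x0 Fx0] S0.
set S := [set x | t <= F x].
have lbS : lbound S x0.
  by move=> x Sx; rewrite leNgt; apply/negP => /ltW/ndF; rewrite leNgt (lt_le_trans Fx0 Sx).
have clS : closed S := preimage_closed (fun x _ => cF x) (@closed_ge _ t).
have Sq : S (inf S).
  apply: (itv_closed_infimums S0 clS); split; first by move=> x; apply: ge_inf; exists x0.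
  by move=> x; apply: lb_le_inf.
have x0q : x0 <= inf S by apply: lb_le_inf.
have [c _ Fc] : exists2 c, c \in `[x0, inf S] & F c = t.
  have := IVT x0q (continuous_subspaceT cF).
  rewrite (min_idPl (ltW (lt_le_trans Fx0 Sq))) (max_idPr (ltW (lt_le_trans Fx0 Sq))).
  by apply; rewrite (ltW Fx0) Sq.
have qc : inf S <= c by apply: ge_inf; [exists x0 | rewrite /S /= Fc].
exists (inf S); split.
- by rewrite quantile_inf //; exists x0.
- by apply/le_anti; rewrite Sq andbT -[X in _ <= X]Fc ndF.
- move=> x; split=> [Sx|qx]; first by apply: ge_inf => //; exists x0.
  exact: le_trans Sq (ndF _ _ qx).
Qed.
End quantile.

Section distribution_function.
Context {R : realType} {dT : measure_display} {T : measurableType dT}.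
Variable P : probability T R.

Lemma measurable_sublevel {Z : T -> R} x :
  measurable_fun setT Z -> measurable [set w | Z w <= x].
Proof.
move=> mZ; have := mZ measurableT _ (measurable_itv `]-oo, x]).
by rewrite setTI; congr measurable; apply/seteqP; split => w /=; rewrite in_itv.
Qed.

Lemma measurable_sublevels {n : nat} {Z : 'I_n -> T -> R} (c : 'I_n -> R) :
  (forall i, measurable_fun setT (Z i)) -> measurable [set w | forall i, Z i w <= c i].
Proof.
move=> mZ; rewrite [X in measurable X](_ : _ = \bigcap_(i in setT) [set w | Z i w <= c i]).
  by apply: fin_bigcap_measurable => // i _; exact: measurable_sublevel.
by apply/seteqP; split => w /= wZ i => [_|]; exact: wZ.
Qed.

Context {Z : T -> R} (mZ : measurable_fun setT Z).

Lemma df_ge0 x : 0 <= df P Z x.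
Proof. exact: pr_ge0. Qed.

Lemma df_le1 x : df P Z x <= 1.
Proof. by apply: pr_le1; exact: measurable_sublevel. Qed.

Lemma df_nondecreasing : nondecreasing_fun (df P Z).
Proof.
move=> x y xy; apply: le_pr; try exact: measurable_sublevel.
by move=> w /= /le_trans; apply.
Qed.

Lemma pr_le_setI_df {A : set T} x : measurable A ->
  pr P A <= pr P (A `&` [set w | Z w <= x]) + (1 - df P Z x).
Proof.
move=> mA; have mZx := measurable_sublevel x mZ.
rewrite -pr_setC // -lerBlDl -prD //.
by apply: le_pr => //; [exact: measurableD | exact: measurableC].
Qed.

Let RV_Z : {RV P >-> R} := mfun_Sub (mem_set mZ).

Let cdf_df : cdf RV_Z = EFin \o df P Z.
Proof. by apply/funext => x; rewrite /= prE //; exact: measurable_sublevel. Qed.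

Lemma exists_df_gt {t} : t < 1 -> exists x, t < df P Z x.
Proof.
by move=> t1; have := cvg_cdfy1 RV_Z; rewrite cdf_df => /fine_cvg/cvgr_gt/(_ _ t1)/filter_ex.
Qed.

Lemma exists_df_lt {t} : 0 < t -> exists x, df P Z x < t.
Proof.
by move=> t0; have := cvg_cdfNy0 RV_Z; rewrite cdf_df => /fine_cvg/cvgr_lt/(_ _ t0)/filter_ex.
Qed.

Lemma continuous_uniform_df : (forall v, 0 <= v <= 1 -> df P Z v = v) ->
  continuous (df P Z).
Proof.
move=> dfZ; have -> : df P Z = (fun v => Num.max v 0) \min (fun=> 1).
  apply/funext => v /=; have [v0|v0] := ltP v 0.
    rewrite (min_idPl ler01); apply/le_anti.
    by rewrite df_ge0 andbT -(dfZ 0) ?lexx ?ler01 // df_nondecreasing // ltW.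
  have [v1|v1] := leP v 1; first by rewrite dfZ ?v0.
  apply/le_anti; rewrite df_le1 -{1}(dfZ 1) ?lexx ?ler01 //.
  by rewrite df_nondecreasing // ltW.
move=> x; apply: continuous_min; last exact: cvg_cst.
by apply: continuous_max; [exact: cvg_id | exact: cvg_cst].
Qed.

Lemma VaR0 : VaR P Z 0 = -oo%E.
Proof.
rewrite /VaR /quantile -ereal_inf_real; congr ereal_inf.
by apply/seteqP; split => _ [x _ <-]; exists x => //; exact: df_ge0.
Qed.

Lemma VaR_continuous t : continuous (df P Z) -> 0 < t < 1 ->
  exists q, VaR P Z t = q%:E /\ df P Z q = t.
Proof.
move=> cZ /andP[t0 t1].
have [x /ltW tx] := exists_df_gt t1.
have [q [VaRq dfq _]] :=
  quantile_continuous cZ df_nondecreasing (exists_df_lt t0) (ex_intro _ x tx).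
by exists q.
Qed.
End distribution_function.

Lemma increment_dominated_continuous {R : realType} (F N : R -> R) :
  (forall x y, x <= y -> 0 <= N y - N x <= F y - F x) -> continuous F -> continuous N.
Proof.
move=> NF cF x; apply/cvgrPdist_le => e e0.
apply: filterS ((cvgrPdist_le _ _).1 (cF x) e e0) => y; apply: le_trans.
have [xy|/ltW yx] := leP x y.
  have /andP[N0 NFxy] := NF _ _ xy.
  by rewrite distrC ger0_norm // distrC ger0_norm // (le_trans N0).
have /andP[N0 NFyx] := NF _ _ yx.
by rewrite ger0_norm // ger0_norm // (le_trans N0).
Qed.

Section conditional_df.
Context {R : realType} {dT : measure_display} {T : measurableType dT}.
Variable P : probability T R.
Context {Z : T -> R} (mZ : measurable_fun setT Z).

Lemma cond_df_setC (B : set T) x : measurable B ->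
  cond_df P Z (~` B) x = (df P Z x - pr P (B `&` [set w | Z w <= x])) / (1 - pr P B).
Proof.
move=> mB; rewrite /cond_df pr_setC // -setDE prD ?(setIC B) //.
exact: measurable_sublevel.
Qed.

Context {A : set T} (mA : measurable A).

Lemma cond_df_increment x y : x <= y ->
  0 <= cond_df P Z A y - cond_df P Z A x <= (df P Z y - df P Z x) / pr P A.
Proof.
move=> xy; have [mZx mZy] := (measurable_sublevel x mZ, measurable_sublevel y mZ).
have [mZxA mZyA] := (measurableI _ _ mZx mA, measurableI _ _ mZy mA).
have sub_xy : [set w | Z w <= x] `<=` [set w | Z w <= y] by move=> w /= /le_trans; apply.
have dF : df P Z y - df P Z x = pr P ([set w | Z w <= y] `\` [set w | Z w <= x]).
  by rewrite prD // (setIidr sub_xy).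
have dN : pr P ([set w | Z w <= y] `&` A) - pr P ([set w | Z w <= x] `&` A) =
          pr P (([set w | Z w <= y] `&` A) `\` ([set w | Z w <= x] `&` A)).
  by rewrite prD // (setIidr (setSI sub_xy)).
rewrite /cond_df -mulrBl; apply/andP; split.
  by rewrite mulr_ge0 ?invr_ge0 ?pr_ge0 // dN pr_ge0.
rewrite ler_wpM2r ?invr_ge0 ?pr_ge0 // dN dF.
apply: le_pr; [exact: measurableD.. |].
by move=> w [[Zy Aw] NZx]; split => // Zx; exact: NZx.
Qed.

Lemma cond_df_nondecreasing : nondecreasing_fun (cond_df P Z A).
Proof. by move=> x y /cond_df_increment /andP[]; rewrite subr_ge0. Qed.

Lemma cond_df_continuous : continuous (df P Z) -> continuous (cond_df P Z A).
Proof.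
move=> cZ; apply: (increment_dominated_continuous (fun x => df P Z x / pr P A)).
  by move=> x y /cond_df_increment; rewrite mulrBl.
by move=> x; apply: cvgMl; exact: cZ.
Qed.

Lemma cond_df_eq0 x : df P Z x = 0 -> cond_df P Z A x = 0.
Proof.
move=> Zx0; have mZx := measurable_sublevel x mZ.
rewrite /cond_df (_ : pr P _ = 0) ?mul0r //; apply/le_anti.
by rewrite pr_ge0 andbT -Zx0 prIl.
Qed.

Lemma cond_df_eq1 x : df P Z x = 1 -> pr P A != 0 -> cond_df P Z A x = 1.
Proof.
move=> Zx1 A0; have mZx := measurable_sublevel x mZ.
rewrite /cond_df setIC (_ : pr P _ = pr P A) ?divff //; apply/le_anti.
by rewrite prIl //=; have := pr_le_setI_df P mZ x mA; rewrite Zx1 subrr addr0.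
Qed.
End conditional_df.

Lemma setC_forall_le {I T : Type} {dO : Order.disp_t} {O : orderType dO}
    (f : I -> T -> O) (c : I -> O) :
  ~` [set w | forall i, (f i w <= c i)%O] = [set w | exists i, (c i < f i w)%O].
Proof.
apply/seteqP; split => w /=; last by move=> [i ci] /(_ i); rewrite leNgt ci.
by move=> /existsNP[i] /negP; rewrite -ltNge => ci; exists i.
Qed.

Section copula_representation.
Context {R : realType} {d : nat}.
Context {dT : measure_display} {T : measurableType dT} {P : probability T R}.
Context {X : 'I_d -> T -> R} {Y : T -> R}.
Context {dT' : measure_display} {T' : measurableType dT'} {P' : probability T' R}.
Context {U : 'I_d -> T' -> R} {V : T' -> R}.
Context {C : ('I_d -> R) -> R -> R} {alpha : 'I_d -> R}.
Hypotheses (mX : forall i, measurable_fun setT (X i)) (mY : measurable_fun setT Y).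
Hypotheses (mU : forall i, measurable_fun setT (U i)) (mV : measurable_fun setT V).
Hypothesis cdfX : forall i, continuous (df P (X i)).
Hypothesis dfU : forall i u, 0 <= u <= 1 -> df P' (U i) u = u.
Hypothesis dfV : forall v, 0 <= v <= 1 -> df P' V v = v.
Hypothesis C_UV : forall u v, (forall i, 0 <= u i <= 1) -> 0 <= v <= 1 ->
  pr P' [set w | (forall i, U i w <= u i) /\ V w <= v] = C u v.
Hypothesis C_XY : forall x y,
  pr P [set w | (forall i, X i w <= x i) /\ Y w <= y]
  = C (fun i => df P (X i) (x i)) (df P Y y).
Hypothesis alpha01 : forall i, 0 <= alpha i < 1.
Hypothesis C_alpha1 : C alpha 1 < 1.

Local Notation BU := [set w | forall i, U i w <= alpha i].
Local Notation AU := [set w | exists i, alpha i < U i w].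
Local Notation BX := [set w | forall i, ((X i w)%:E <= VaR P (X i) (alpha i))%E].

Let mBU : measurable BU := measurable_sublevels alpha mU.
Let mAU : measurable AU.
Proof. by rewrite -setC_forall_le; exact: measurableC. Qed.

Lemma pr_BU_sublevel t : 0 <= t <= 1 -> pr P' (BU `&` [set w | V w <= t]) = C alpha t.
Proof. by move=> t01; apply: C_UV => // i; have /andP[-> /ltW->] := alpha01 i. Qed.

Lemma pr_BU : pr P' BU = C alpha 1.
Proof.
have V1 : df P' V 1 = 1 by rewrite dfV ?lexx ?ler01.
rewrite -(pr_BU_sublevel 1) ?lexx ?ler01 //; apply/le_anti/andP; split.
  by have := pr_le_setI_df P' mV 1 mBU; rewrite V1 subrr addr0.
by rewrite prIl //; exact: measurable_sublevel.
Qed.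

Lemma pr_AU_gt0 : 0 < pr P' AU.
Proof. by rewrite -setC_forall_le pr_setC // pr_BU subr_gt0. Qed.

Lemma C_alpha_eq0 {j t} : alpha j = 0 -> 0 <= t <= 1 -> C alpha t = 0.
Proof.
move=> aj0 t01; rewrite -pr_BU_sublevel //; apply/le_anti; rewrite pr_ge0 andbT.
have Uj0 : df P' (U j) 0 = 0 by rewrite dfU ?lexx ?ler01.
rewrite -[X in _ <= X]Uj0; apply: le_pr.
- exact: measurableI (measurable_sublevel t mV).
- exact: measurable_sublevel.
- by move=> w [/(_ j)]; rewrite aj0.
Qed.

Lemma cond_df_AU_quantile {beta} : 0 < beta < 1 -> exists r,
  quantile (cond_df P' V AU) beta%:E = r%:E /\
  forall v, beta <= cond_df P' V AU v <-> r <= v.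
Proof.
move=> /andP[b0 b1].
have H0 : cond_df P' V AU 0 < beta by rewrite cond_df_eq0 // dfV // lexx ler01.
have H1 : beta <= cond_df P' V AU 1.
  by rewrite cond_df_eq1 ?dfV ?lexx ?ler01 ?ltW // gt_eqF // pr_AU_gt0.
have [r [-> _ Hr]] := quantile_continuous
  (cond_df_continuous P' mV mAU (continuous_uniform_df P' mV dfV))
  (cond_df_nondecreasing P' mV mAU) (ex_intro _ 0 H0) (ex_intro _ 1 H1).
by exists r.
Qed.

Lemma VaR_below_cases :
  (exists j, alpha j = 0) /\ BX = set0 \/
  exists q, BX = [set w | forall i, X i w <= q i] /\ (fun i => df P (X i) (q i)) = alpha.
Proof.
have [[j aj0]|alpha_neq0] := pselect (exists j, alpha j = 0).
  left; split; first by exists j.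
  by apply/seteqP; split => // w /(_ j); rewrite aj0 VaR0.
right; have VaR_q i : exists q, VaR P (X i) (alpha i) = q%:E /\ df P (X i) q = alpha i.
  apply: VaR_continuous => //; have /andP[ai0 ->] := alpha01 i.
  by rewrite lt_def ai0 !andbT; apply/eqP => ai; apply: alpha_neq0; exists i.
have [q Hq] := choice VaR_q; exists q; split.
  by apply/seteqP; split => w /= wq i; have := wq i; rewrite (Hq i).1 lee_fin.
by apply/funext => i; rewrite (Hq i).2.
Qed.

Lemma measurable_BX : measurable BX.
Proof.
case: VaR_below_cases => [[_ ->]|[q [-> _]]]; first exact: measurable0.
exact: measurable_sublevels.
Qed.

Lemma pr_BX_sublevel y : pr P (BX `&` [set w | Y w <= y]) = C alpha (df P Y y).
Proof.
case: VaR_below_cases => [[[j aj0] ->]|[q [-> <-]]]; last exact: C_XY.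
by rewrite set0I measure0 (C_alpha_eq0 aj0) // df_ge0 df_le1.
Qed.

Lemma pr_BX : pr P BX = pr P' BU.
Proof.
have mBX := measurable_BX.
suff BX_BU e : 0 < e -> pr P BX <= pr P' BU + e /\ pr P' BU <= pr P BX + e.
  by apply/le_anti/andP; split; apply/ler_addgt0Pr => e /BX_BU[].
move=> e0; have [y Gy] : exists y, 1 - e < df P Y y by apply: (exists_df_gt P mY); lra.
have Gy01 : 0 <= df P Y y <= 1 by rewrite df_ge0 df_le1.
(* Both probabilities are within [1 - df P Y y] of [C alpha (df P Y y)]. *)
have BX_ge := pr_le_setI_df P mY y mBX.
have BU_ge := pr_le_setI_df P' mV (df P Y y) mBU.
have BX_le := prIl P mBX (measurable_sublevel y mY).
have BU_le := prIl P' mBU (measurable_sublevel (df P Y y) mV).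
rewrite dfV // pr_BX_sublevel pr_BU_sublevel // in BX_ge BU_ge BX_le BU_le; lra.
Qed.

Lemma cond_df_exceed_event :
  cond_df P Y (exceed_event P X alpha) = cond_df P' V AU \o df P Y.
Proof.
apply/funext => y /=; have Gy01 : 0 <= df P Y y <= 1 by rewrite df_ge0 df_le1.
rewrite /exceed_event -!setC_forall_le !cond_df_setC //; last exact: measurable_BX.
by rewrite pr_BX dfV // pr_BX_sublevel pr_BU_sublevel.
Qed.
End copula_representation.

Theorem corollary3p3 (R : realType) (d : nat) (hd : (0 < d)%N)
  (dT : measure_display) (T : measurableType dT) (P : probability T R)
  (X : 'I_d -> T -> R) (Y : T -> R)
  (dT' : measure_display) (T' : measurableType dT') (P' : probability T' R)
  (U : 'I_d -> T' -> R) (V : T' -> R)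
  (C : ('I_d -> R) -> R -> R) (alpha : 'I_d -> R) :
  (forall i, measurable_fun setT (X i)) -> measurable_fun setT Y ->
  (forall i, measurable_fun setT (U i)) -> measurable_fun setT V ->
  (* continuous marginal distribution functions *)
  (forall i, continuous (df P (X i) : R -> R)) -> continuous (df P Y : R -> R) ->
  (* (U, V) has standard uniform marginals and joint distribution function C
     on [0,1]^(d+1), i.e. C is a (d+1)-copula, the copula of (U, V) *)
  (forall i (u : R), 0 <= u <= 1 -> df P' (U i) u = u) ->
  (forall v : R, 0 <= v <= 1 -> df P' V v = v) ->
  (forall (u : 'I_d -> R) (v : R), (forall i, 0 <= u i <= 1) -> 0 <= v <= 1 ->
     fine (P' [set w | (forall i, U i w <= u i) /\ V w <= v]) = C u v) ->
  (* C is the copula of (X, Y) (Sklar representation) *)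
  (forall (x : 'I_d -> R) (y : R),
     fine (P [set w | (forall i, X i w <= x i) /\ Y w <= y])
     = C (fun i => df P (X i) (x i)) (df P Y y)) ->
  (forall i, 0 <= alpha i < 1) ->
  C alpha 1 < 1 ->
  forall beta : R, 0 < beta < 1 ->
  VCoVaR P X Y alpha beta =
  quantile (df P Y)
    (quantile (cond_df P' V [set w | exists i, alpha i < U i w]) beta%:E).
Proof.
move=> mX mY mU mV cdfX _ dfU dfV C_UV C_XY alpha01 C_alpha1 beta beta01.
have [r [-> Hr]] := cond_df_AU_quantile mU mV dfV C_UV alpha01 C_alpha1 beta01.
rewrite /VCoVaR (cond_df_exceed_event mX mY mU mV cdfX dfU dfV C_UV C_XY alpha01).
exact: quantile_comp.
Qed.
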